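(* Suppose $F_i$ satisfies the Production Function Assumption with condition (b), and $W_i$ satisfies the Labor Cost Assumption and the Growth Assumption. Then for every $\mathbf P\in\mathbb R^N_{>0}$ and $P_E>0$, $$\overline\Pi_i(\mathbf P,P_E)=W_i^*\big(\widetilde\Pi_i(\mathbf P,P_E)\big),$$ where $$\widetilde\Pi_i(\mathbf P,P_E)=\max_{\tilde{\mathbf q}_i\in\mathbb R^N_{\ge0},\,\tilde E_i\ge0}\Big\{P_iF_i(\tilde{\mathbf q}_i,\tilde E_i,1)-\sum_{j=1}^NP_j\tilde q_{ij}-P_E\tilde E_i\Big\}.$$ Moreover, if $W_i$ is strictly convex and differentiable, an optimal input vector $(\mathbf q_i^*,E_i^*,L_i^* )$ for $\overline\Pi_i(\mathbf P,P_E)$ is given by $$L_i^*=(W_i')^{-1}\big(\widetilde\Pi_i(\mathbf P,P_E)\big),\quad q^*_{ij}=\tilde q^*_{ij}L_i^*\ (j=1,\dots,N),\quad E_i^*=\tilde E_i^*L_i^*,$$ where $(\tilde{\mathbf q}_i^*,\tilde E_i^* )$ is a maximiser of the problem defining $\widetilde\Pi_i(\mathbf P,P_E)$.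
   Context: Inputs $(\mathbf q_i,E_i,L_i)\in\mathbb R^{N+2}_{\ge0}$ with $\mathbf q_i=(q_{ij})_{j=1}^N$; production function $F_i:\mathbb R^{N+2}_{\ge0}\to\mathbb R_{\ge0}$; labor cost $W_i:\mathbb R_{\ge0}\to\mathbb R_{>0}$. Profit $\Pi_i(\mathbf P,P_E,\mathbf q_i,E_i,L_i)=P_iF_i(\mathbf q_i,E_i,L_i)-\sum_jP_jq_{ij}-P_EE_i-W_i(L_i)$, and $\overline\Pi_i(\mathbf P,P_E)=\max_{(\mathbf q_i,E_i,L_i)\in\mathbb R^{N+2}_{\ge0}}\Pi_i$. The convex conjugate is $W_i^*(y)=\max_{L\ge0}\{Ly-W_i(L)\}$, $y\in\mathbb R$. Production Function Assumption (b): $F_i$ increasing in each argument, upper semi-continuous, concave, homogeneous of degree one ($F_i(\lambda\mathbf x)=\lambda F_i(\mathbf x)$ for $\lambda>0$), and $F_i(\mathbf q,E,L)\le c_iL$ for some $c_i<\infty$. Labor Cost Assumption: $W_i$ strictly increasing, lower semi-continuous, convex. Growth Assumption: $\lim_{L\to\infty}W_i(L)/L=+\infty$. *)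

From HB Require Import structures.
From mathcomp Require Import all_boot all_order all_algebra.
From mathcomp Require Import boolp classical_sets reals.
Set Implicit Arguments. Unset Strict Implicit. Unset Printing Implicit Defensive.
Import Order.TTheory GRing.Theory Num.Theory.
Local Open Scope ring_scope.
Local Open Scope classical_set_scope.

Section Defs.
Variables (R : realType) (N : nat).

Definition vec := 'I_N -> R.

Definition nonneg_vec (q : vec) : Prop := forall j, 0 <= q j.
Definition pos_vec (q : vec) : Prop := forall j, 0 < q j.

Definition feasible (q : vec) (E L : R) : Prop := nonneg_vec q /\ 0 <= E /\ 0 <= L.

(* Production functions F_i : R^{N+2}_{>=0} -> R_{>=0}, represented on all of R^{N+2};
   only the values on the nonnegative orthant matter. *)
Definition prodfun := vec -> R -> R -> R.

Definition scale_vec (a : R) (q : vec) : vec := fun j => a * q j.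
Definition comb_vec (t : R) (q q' : vec) : vec := fun j => t * q j + (1 - t) * q' j.

Definition prod_nonneg (F : prodfun) : Prop :=
  forall q E L, feasible q E L -> 0 <= F q E L.

Definition prod_increasing (F : prodfun) : Prop :=
  forall q E L q' E' L', feasible q E L -> feasible q' E' L' ->
    (forall j, q j <= q' j) -> E <= E' -> L <= L' -> F q E L <= F q' E' L'.

Definition prod_usc (F : prodfun) : Prop :=
  forall q E L, feasible q E L -> forall eps : R, 0 < eps ->
    exists2 delta : R, 0 < delta &
      forall q' E' L', feasible q' E' L' ->
        (forall j, `|q' j - q j| < delta) -> `|E' - E| < delta -> `|L' - L| < delta ->
        F q' E' L' < F q E L + eps.

Definition prod_concave (F : prodfun) : Prop :=
  forall q E L q' E' L' (t : R), feasible q E L -> feasible q' E' L' ->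
    0 <= t <= 1 ->
    t * F q E L + (1 - t) * F q' E' L'
      <= F (comb_vec t q q') (t * E + (1 - t) * E') (t * L + (1 - t) * L').

Definition prod_hom1 (F : prodfun) : Prop :=
  forall q E L (lam : R), feasible q E L -> 0 < lam ->
    F (scale_vec lam q) (lam * E) (lam * L) = lam * F q E L.

Definition prod_labor_bound (F : prodfun) : Prop :=
  exists c : R, forall q E L, feasible q E L -> F q E L <= c * L.

Definition ProdAssumption_b (F : prodfun) : Prop :=
  prod_nonneg F /\ prod_increasing F /\ prod_usc F /\ prod_concave F /\
  prod_hom1 F /\ prod_labor_bound F.

(* Labor cost W_i : R_{>=0} -> R_{>0}, represented on R; only values on [0,oo) matter. *)
Definition LaborCostAssumption (W : R -> R) : Prop :=
  [/\ (forall L, 0 <= L -> 0 < W L),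
      (forall L L', 0 <= L -> L < L' -> W L < W L'),
      (forall L, 0 <= L -> forall eps : R, 0 < eps ->
         exists2 delta : R, 0 < delta &
           forall L', 0 <= L' -> `|L' - L| < delta -> W L - eps < W L')
    &
      (forall L L' (t : R), 0 <= L -> 0 <= L' -> 0 <= t <= 1 ->
         W (t * L + (1 - t) * L') <= t * W L + (1 - t) * W L')].

Definition GrowthAssumption (W : R -> R) : Prop :=
  forall M : R, exists L0 : R, forall L, L0 <= L -> 0 < L -> M <= W L / L.

Definition strictly_convex_nonneg (W : R -> R) : Prop :=
  forall L L' (t : R), 0 <= L -> 0 <= L' -> L != L' -> 0 < t < 1 ->
    W (t * L + (1 - t) * L') < t * W L + (1 - t) * W L'.

Definition has_deriv_nonneg (W : R -> R) (x d : R) : Prop :=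
  forall eps : R, 0 < eps -> exists2 delta : R, 0 < delta &
    forall h : R, h != 0 -> `|h| < delta -> 0 <= x + h ->
      `|(W (x + h) - W x) / h - d| < eps.

Definition differentiable_nonneg (W : R -> R) : Prop :=
  forall x, 0 <= x -> exists d, has_deriv_nonneg W x d.

Definition profit (F : prodfun) (W : R -> R) (i : 'I_N) (P : vec) (PE : R)
    (q : vec) (E L : R) : R :=
  P i * F q E L - \sum_(j < N) P j * q j - PE * E - W L.

Definition Pibar (F : prodfun) (W : R -> R) (i : 'I_N) (P : vec) (PE : R) : R :=
  sup [set r | exists q E L, feasible q E L /\ r = profit F W i P PE q E L].

Definition unit_profit (F : prodfun) (i : 'I_N) (P : vec) (PE : R)
    (qt : vec) (Et : R) : R :=
  P i * F qt Et 1 - \sum_(j < N) P j * qt j - PE * Et.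

Definition Pitilde (F : prodfun) (i : 'I_N) (P : vec) (PE : R) : R :=
  sup [set r | exists qt Et, nonneg_vec qt /\ 0 <= Et /\ r = unit_profit F i P PE qt Et].

Definition Wstar (W : R -> R) (y : R) : R :=
  sup [set r | exists L, 0 <= L /\ r = L * y - W L].

End Defs.

From HB Require Import structures.
From mathcomp Require Import all_boot all_order all_algebra.
From mathcomp Require Import boolp classical_sets reals.
From mathcomp Require Import ring lra.
Set Implicit Arguments. Unset Strict Implicit. Unset Printing Implicit Defensive.
Import Order.TTheory GRing.Theory Num.Theory.
Local Open Scope ring_scope.

(* Homogeneity of degree one turns a plan (q, E, L) with L > 0 into the unit-labor
   plan (q / L, E / L, 1), so that profit (q, E, L) = L * unit_profit (q/L, E/L) - W L.
   Maximising first over the unit-labor plan gives L * Pitilde - W L, and then over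
   L >= 0 gives the convex conjugate of W at Pitilde.  For the optimal plan, the
   condition W'(Ls) = Pitilde and convexity of W make the tangent line of W at Ls a
   minorant of W, so Ls maximises L * Pitilde - W L. *)

Section ConvexTangent.
Variables (R : realType) (W : R -> R).
Hypothesis Wconvex : forall L L' (t : R), 0 <= L -> 0 <= L' -> 0 <= t <= 1 ->
  W (t * L + (1 - t) * L') <= t * W L + (1 - t) * W L'.

Lemma convex_chord_le (x L t : R) :
  0 <= x -> 0 <= L -> 0 <= t <= 1 ->
  W (x + t * (L - x)) - W x <= t * (W L - W x).
Proof.
move=> x_ge0 L_ge0 t01.
have -> : x + t * (L - x) = t * L + (1 - t) * x by ring.
have := Wconvex L_ge0 x_ge0 t01; lra.
Qed.

Lemma convex_tangent_le (x d L : R) :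
  0 <= x -> 0 <= L -> has_deriv_nonneg W x d -> W x + d * (L - x) <= W L.
Proof.
move=> x_ge0 L_ge0 Wderiv.
have [->|L_neq_x] := eqVneq L x; first by rewrite subrr mulr0 addr0.
rewrite leNgt; apply/negP; rewrite -subr_gt0.
set D := L - x; set gap := W x + d * D - W L => gap_gt0.
have D_neq0 : D != 0 by rewrite /D subr_eq0.
have D_gt0 : 0 < `|D| by rewrite normr_gt0.
have [del del_gt0 Wquot] := Wderiv (gap / `|D|) (divr_gt0 (gap_gt0 : 0 < gap) D_gt0).
(* Step t * D towards L, with t so small that |t * D| < del. *)
set t := del / (del + `|D|).
have t_gt0 : 0 < t by rewrite divr_gt0 // addr_gt0.
have t_lt1 : t < 1 by rewrite ltr_pdivrMr ?addr_gt0 // mul1r ltrDl.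
have step_lt : `|t * D| < del.
  rewrite normrM gtr0_norm // /t mulrAC ltr_pdivrMr ?addr_gt0 //.
  by rewrite mulrDr ltrDr mulr_gt0.
have step_neq0 : t * D != 0 by rewrite mulf_neq0 // gt_eqF.
have step_ge0 : 0 <= x + t * D.
  have -> : x + t * D = t * L + (1 - t) * x by rewrite /D; ring.
  by rewrite addr_ge0 // mulr_ge0 // ?subr_ge0 ltW.
have t01 : 0 <= t <= 1 by rewrite !ltW.
have chord := convex_chord_le x_ge0 L_ge0 t01.
have := Wquot _ step_neq0 step_lt step_ge0.
set A := W (x + t * D) - W x - d * (t * D).
have -> : (W (x + t * D) - W x) / (t * D) - d = A / (t * D).
  by rewrite /A; field; rewrite D_neq0 gt_eqF.
have A_le : A <= - (t * gap) by rewrite /A /gap; lra.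
rewrite normrM normfV ltr_pdivrMr ?normr_gt0 // normrM (gtr0_norm t_gt0).
have -> : gap / `|D| * (t * `|D|) = t * gap by field; rewrite gt_eqF.
rewrite ltNge -normrN ler_normr; apply/negP/negPn/orP; left; lra.
Qed.

End ConvexTangent.

Section Firm.
Variables (R : realType) (N : nat) (i : 'I_N) (F : prodfun R N) (W : R -> R).
Variables (P : vec R N) (PE : R).
Hypotheses (P_ge0 : forall j, 0 <= P j) (PE_ge0 : 0 <= PE).
Hypotheses (F_ge0 : prod_nonneg F) (F_hom1 : prod_hom1 F)
  (F_labor_bound : prod_labor_bound F).
Hypotheses (W_gt0 : forall L, 0 <= L -> 0 < W L) (W_growth : GrowthAssumption W).

Let Pt := Pitilde F i P PE.

Lemma input_cost_ge0 (q : vec R N) (E : R) :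
  nonneg_vec q -> 0 <= E -> 0 <= \sum_(j < N) P j * q j + PE * E.
Proof.
move=> q_ge0 E_ge0.
by rewrite addr_ge0 ?mulr_ge0 // sumr_ge0 // => j _; rewrite mulr_ge0.
Qed.

Lemma prod_labor0 (q : vec R N) (E : R) :
  nonneg_vec q -> 0 <= E -> F q E 0 = 0.
Proof.
move=> q_ge0 E_ge0; have [c Fc] := F_labor_bound.
have qE0 : feasible q E 0 by [].
by apply/eqP; rewrite eq_le F_ge0 // andbT; have := Fc q E 0 qE0; rewrite mulr0.
Qed.

Lemma profit_scale (qt : vec R N) (Et L : R) :
  nonneg_vec qt -> 0 <= Et -> 0 <= L ->
  profit F W i P PE (scale_vec L qt) (Et * L) L =
  L * unit_profit F i P PE qt Et - W L.
Proof.
move=> qt_ge0 Et_ge0 L_ge0.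
have prod_scale : F (scale_vec L qt) (Et * L) L = L * F qt Et 1.
  have [->|L_neq0] := eqVneq L 0.
    by rewrite mul0r mulr0 prod_labor0 // => j; rewrite /scale_vec mul0r.
  by rewrite mulrC -{3}(mulr1 L) F_hom1 // lt_def L_neq0.
rewrite /profit /unit_profit prod_scale.
have -> : \sum_(j < N) P j * scale_vec L qt j = L * \sum_(j < N) P j * qt j.
  by rewrite big_distrr; apply: eq_bigr => j _ /=; rewrite /scale_vec; ring.
ring.
Qed.

Lemma has_sup_unit_profit :
  has_sup [set r | exists qt Et, nonneg_vec qt /\ 0 <= Et /\
                                 r = unit_profit F i P PE qt Et].
Proof.
have [c Fc] := F_labor_bound; split.
  by exists (unit_profit F i P PE (fun=> 0) 0), (fun=> 0), 0; split => //; split.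
exists (P i * c) => _ [qt [Et [qt_ge0 [Et_ge0 ->]]]].
have Fle : P i * F qt Et 1 <= P i * c by rewrite ler_wpM2l // -(mulr1 c) Fc.
have := input_cost_ge0 qt_ge0 Et_ge0; rewrite /unit_profit; lra.
Qed.

Lemma unit_profit_le_Pitilde (qt : vec R N) (Et : R) :
  nonneg_vec qt -> 0 <= Et -> unit_profit F i P PE qt Et <= Pt.
Proof.
by move=> qt_ge0 Et_ge0; apply: (sup_upper_bound has_sup_unit_profit); exists qt, Et.
Qed.

Lemma has_sup_conjugate (y : R) : has_sup [set r | exists L, 0 <= L /\ r = L * y - W L].
Proof.
split; first by exists (0 * y - W 0), 0.
have [L0 growth] := W_growth `|y|.
exists (`|y| * `|L0|) => _ [L [L_ge0 ->]].
have yL : L * y <= L * `|y| by rewrite ler_wpM2l // ler_norm.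
have := W_gt0 L_ge0; have := normr_ge0 y; have := normr_ge0 L0.
have [L0_le_L|L_lt_L0] := leP L0 L; last first.
  have : L <= `|L0| by rewrite (le_trans (ltW L_lt_L0)) // ler_norm.
  nra.
have [->|L_neq0] := eqVneq L 0; first by nra.
have L_gt0 : 0 < L by rewrite lt_def L_neq0.
have := growth L L0_le_L L_gt0; rewrite ler_pdivlMr //; nra.
Qed.

Lemma conjugate_le_Wstar (y L : R) : 0 <= L -> L * y - W L <= Wstar W y.
Proof. by move=> L_ge0; apply: (sup_upper_bound (has_sup_conjugate y)); exists L. Qed.

Lemma profit_le_conjugate (q : vec R N) (E L : R) :
  feasible q E L -> profit F W i P PE q E L <= L * Pt - W L.
Proof.
move=> [q_ge0 [E_ge0 L_ge0]].
have [L0|L_neq0] := eqVneq L 0.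
  rewrite L0 /profit prod_labor0 // mul0r mulr0.
  have := input_cost_ge0 q_ge0 E_ge0; lra.
have L_gt0 : 0 < L by rewrite lt_def L_neq0.
have qt_ge0 : nonneg_vec (scale_vec L^-1 q).
  by move=> j; rewrite mulr_ge0 ?invr_ge0.
have q_eq : scale_vec L (scale_vec L^-1 q) = q.
  by apply/funext => j; rewrite /scale_vec mulrA mulfV ?mul1r.
have E_eq : E / L * L = E by rewrite mulfVK.
rewrite -{1}q_eq -{1}E_eq profit_scale ?divr_ge0 // lerD2r ler_wpM2l //.
exact: unit_profit_le_Pitilde qt_ge0 (divr_ge0 E_ge0 L_ge0).
Qed.

Lemma has_sup_profit :
  has_sup [set r | exists q E L, feasible q E L /\ r = profit F W i P PE q E L].
Proof.
split; first by exists (profit F W i P PE (fun=> 0) 0 0), (fun=> 0), 0, 0; do 2!split.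
exists (Wstar W Pt) => _ [q [E [L [qEL ->]]]].
apply: le_trans (profit_le_conjugate qEL) _.
by apply: conjugate_le_Wstar; case: qEL => _ [].
Qed.

Lemma Pibar_eq_Wstar : Pibar F W i P PE = Wstar W Pt.
Proof.
apply/eqP; rewrite eq_le; apply/andP; split.
  apply: ge_sup; first by case: has_sup_profit.
  move=> _ [q [E [L [qEL ->]]]]; apply: le_trans (profit_le_conjugate qEL) _.
  by apply: conjugate_le_Wstar; case: qEL => _ [].
apply: ge_sup; first by case: (has_sup_conjugate Pt).
move=> _ [L [L_ge0 ->]]; apply/ler_addgt0Pr => e e_gt0.
have L1_gt0 : 0 < L + 1 by rewrite ltr_wpDl.
(* A unit plan within e / (L + 1) of Pitilde loses at most e once scaled by L. *)
have [_ [qt [Et [qt_ge0 [Et_ge0 ->]]]] near_Pt] :=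
  sup_adherent (divr_gt0 e_gt0 L1_gt0) has_sup_unit_profit.
have scaled_le : profit F W i P PE (scale_vec L qt) (Et * L) L <= Pibar F W i P PE.
  apply: (sup_upper_bound has_sup_profit).
  exists (scale_vec L qt), (Et * L), L; split => //.
  by split; [move=> j; rewrite mulr_ge0 | split; rewrite ?mulr_ge0].
rewrite profit_scale // in scaled_le.
have loss_le : L * (e / (L + 1)) <= e.
  by rewrite mulrCA ger_pMr // ler_pdivrMr // mul1r lerDl.
have := ler_wpM2l L_ge0 (ltW near_Pt); rewrite mulrBr -/(Pitilde F i P PE) -/Pt; lra.
Qed.

Lemma Pitilde_attained (qt : vec R N) (Et : R) :
  nonneg_vec qt -> 0 <= Et ->
  (forall qt' Et', nonneg_vec qt' -> 0 <= Et' ->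
     unit_profit F i P PE qt' Et' <= unit_profit F i P PE qt Et) ->
  unit_profit F i P PE qt Et = Pt.
Proof.
move=> qt_ge0 Et_ge0 qt_max; apply/eqP; rewrite eq_le unit_profit_le_Pitilde //=.
apply: ge_sup; first by case: has_sup_unit_profit.
by move=> _ [qt' [Et' [qt'_ge0 [Et'_ge0 ->]]]]; apply: qt_max.
Qed.

Lemma optimal_input (Ls : R) (qt : vec R N) (Et : R) :
  (forall L L' (t : R), 0 <= L -> 0 <= L' -> 0 <= t <= 1 ->
     W (t * L + (1 - t) * L') <= t * W L + (1 - t) * W L') ->
  0 <= Ls -> has_deriv_nonneg W Ls Pt ->
  nonneg_vec qt -> 0 <= Et ->
  (forall qt' Et', nonneg_vec qt' -> 0 <= Et' ->
     unit_profit F i P PE qt' Et' <= unit_profit F i P PE qt Et) ->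
  feasible (scale_vec Ls qt) (Et * Ls) Ls /\
  forall q E L, feasible q E L ->
    profit F W i P PE q E L <= profit F W i P PE (scale_vec Ls qt) (Et * Ls) Ls.
Proof.
move=> Wconvex Ls_ge0 Wderiv qt_ge0 Et_ge0 qt_max; split.
  by split; [move=> j; rewrite mulr_ge0 | split; rewrite ?mulr_ge0].
move=> q E L qEL; have L_ge0 : 0 <= L by case: qEL => _ [].
rewrite profit_scale // Pitilde_attained //.
apply: le_trans (profit_le_conjugate qEL) _.
have := convex_tangent_le Wconvex Ls_ge0 L_ge0 Wderiv; lra.
Qed.

End Firm.

Theorem proposition2p2 (R : realType) (N : nat) (i : 'I_N)
    (F : prodfun R N) (W : R -> R)
    (HF : ProdAssumption_b F) (HW : LaborCostAssumption W) (HG : GrowthAssumption W) :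
  forall (P : vec R N) (PE : R), pos_vec P -> 0 < PE ->
    Pibar F W i P PE = Wstar W (Pitilde F i P PE) /\
    (strictly_convex_nonneg W -> differentiable_nonneg W ->
     forall (Lstar : R), 0 <= Lstar ->
       has_deriv_nonneg W Lstar (Pitilde F i P PE) ->
     forall (qt : vec R N) (Et : R), nonneg_vec qt -> 0 <= Et ->
       (forall qt' Et', nonneg_vec qt' -> 0 <= Et' ->
          unit_profit F i P PE qt' Et' <= unit_profit F i P PE qt Et) ->
     feasible (scale_vec Lstar qt) (Et * Lstar) Lstar /\
     forall q E L, feasible q E L ->
       profit F W i P PE q E L
         <= profit F W i P PE (scale_vec Lstar qt) (Et * Lstar) Lstar).
Proof.
move=> P PE P_gt0 PE_gt0.
have P_ge0 j : 0 <= P j by exact: ltW.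
have PE_ge0 : 0 <= PE by exact: ltW.
have [F_ge0 [_ [_ [_ [F_hom1 F_labor_bound]]]]] := HF.
have [W_gt0 _ _ Wconvex] := HW.
split; first exact: Pibar_eq_Wstar.
move=> _ _ Ls Ls_ge0 Wderiv qt Et qt_ge0 Et_ge0 qt_max.
exact: optimal_input.
Qed.
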